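(* Let $m,n$ be even nonnegative integers. If $A(m)$ and $A(n)$ are isomorphic as edge-labeled directed graphs, then $m=n$.
   Context: A hyperbinary expansion of a nonnegative integer $n$ is a word $x_0\cdots x_k$ over $\{0,1,2\}$ with $x_0\ne0$ and $\sum_i x_i2^{k-i}=n$; the empty word is the unique expansion of $0$. $\mathcal H(n)$ is the set of such expansions. $A(n)$ is the directed graph on $\mathcal H(n)$ with the following labeled arcs, for arbitrary words $\mathbf x,\mathbf y$ whenever both endpoints lie in $\mathcal H(n)$: \begin{itemize} \item an arc labeled $\to$ from $\mathbf x02\mathbf y$ to $\mathbf x10\mathbf y$ and from $2\mathbf y$ to $10\mathbf y$; \item an arc labeled $\twoheadrightarrow$ from $\mathbf x12\mathbf y$ to $\mathbf x20\mathbf y$. \end{itemize} An isomorphism of edge-labeled directed graphs is a bijection $\varphi$ of vertex sets such that $(x,y)$ is an arc with label $\ell$ if and only if $(\varphi(x),\varphi(y))$ is an arc with label $\ell$. *)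

From mathcomp Require Import all_boot.
Set Implicit Arguments. Unset Strict Implicit. Unset Printing Implicit Defensive.

(* value of x_0 ... x_k = sum_i x_i 2^(k-i)  (Horner, most significant first) *)
Definition word_val (w : seq nat) : nat := foldl (fun acc d => acc.*2 + d) 0 w.

(* w is a hyperbinary expansion of n: digits in {0,1,2}, x_0 <> 0, value n.
   The empty word is the (unique) expansion of 0. *)
Definition hyperbinary (n : nat) (w : seq nat) : Prop :=
  all (fun d => d < 3) w /\
  (if w is x0 :: _ then x0 != 0 else True) /\
  word_val w = n.

Inductive arc_label := Single | Double .

Definition raw_arc (l : arc_label) (x y : seq nat) : Prop :=
  match l with
  | Single =>
      (exists u v, x = u ++ [:: 0; 2] ++ v /\ y = u ++ [:: 1; 0] ++ v) \/
      (exists v, x = 2 :: v /\ y = [:: 1, 0 & v])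
  | Double =>
      exists u v, x = u ++ [:: 1; 2] ++ v /\ y = u ++ [:: 2; 0] ++ v
  end.

Definition A_arc (n : nat) (l : arc_label) (x y : seq nat) : Prop :=
  hyperbinary n x /\ hyperbinary n y /\ raw_arc l x y.

Definition A_isomorphic (m n : nat) : Prop :=
  exists (phi psi : seq nat -> seq nat),
    (forall x, hyperbinary m x -> hyperbinary n (phi x)) /\
    (forall y, hyperbinary n y -> hyperbinary m (psi y)) /\
    (forall x, hyperbinary m x -> psi (phi x) = x) /\
    (forall y, hyperbinary n y -> phi (psi y) = y) /\
    (forall l x y, hyperbinary m x -> hyperbinary m y ->
       (A_arc m l x y <-> A_arc n l (phi x) (phi y))).

(* A ->-arc raises the number of digits 1 by one and a ->>-arc lowers it by one, and every
   expansion of m is joined by a chain of arcs to the binary expansion of m.  Hence an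
   isomorphism A(m) ~ A(n) shifts the number of ones by a constant.  For even m there is an
   expansion without ones, so the shift is nonnegative, and by symmetry it is zero.  Finally,
   splitting on the last digit shows that the sum of 2 ^ (number of ones) over H(n) is n + 1,
   so the bijection yields m + 1 = n + 1. *)

From mathcomp Require Import all_boot zify.

Definition ones (x : seq nat) : nat := count_mem 1 x.

Definition lead_nonzero (x : seq nat) : bool := if x is x0 :: _ then x0 != 0 else true.

Lemma hyperbinaryE n x :
  hyperbinary n x <-> [/\ all (fun d => d < 3) x, lead_nonzero x & word_val x = n].
Proof. by case: x => [|a x]; split=> [[? [? ?]] | [? ? ?]]. Qed.

Lemma word_val_rcons w d : word_val (rcons w d) = (word_val w).*2 + d.
Proof. by rewrite /word_val foldl_rcons. Qed.

Lemma word_val_cat u v : word_val (u ++ v) = word_val u * 2 ^ size v + word_val v.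
Proof.
elim/last_ind: v => [|v d IH]; first by rewrite cats0 expn0 muln1 addn0.
by rewrite -rcons_cat !word_val_rcons IH size_rcons expnS; lia.
Qed.

Lemma word_val_cons d v : word_val (d :: v) = d * 2 ^ size v + word_val v.
Proof. by rewrite -cat1s word_val_cat. Qed.

Lemma hyperbinary0 x : hyperbinary 0 x -> x = [::].
Proof.
case: x => [//|d v] /hyperbinaryE[_ /= d0].
by rewrite word_val_cons; have := expn_gt0 2 (size v); lia.
Qed.

Lemma hyperbinary_rcons n w d : hyperbinary n (rcons w d) <->
  [/\ d < 3, hyperbinary (word_val w) w, n = (word_val w).*2 + d & (w = [::] -> d != 0)].
Proof.
rewrite !hyperbinaryE word_val_rcons -cats1 all_cat /= andbT.
case: w => [|a w] /=; split.
- by case=> d3 d0 <-.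
- by case=> d3 _ -> /(_ erefl).
- by case=> /andP[aw d3] a0 <-.
- by case=> d3 [/= /andP[-> ->] [a0 _]] -> _; rewrite d3.
Qed.

(* [k] is fuel: each step halves [n], so [n < k] suffices. *)
Fixpoint expansions_fuel (k n : nat) : seq (seq nat) :=
  if k is k'.+1 then
    if n == 0 then [:: [::]]
    else if odd n then [seq rcons w 1 | w <- expansions_fuel k' n./2]
    else [seq rcons w 0 | w <- expansions_fuel k' n./2] ++
         [seq rcons w 2 | w <- expansions_fuel k' n./2.-1]
  else [::].

Definition expansions (n : nat) : seq (seq nat) := expansions_fuel n.+1 n.

Lemma expansions_fuel_sound k n x : x \in expansions_fuel k n -> hyperbinary n x.
Proof.
elim: k n x => [//|k IH] n x /=.
case: eqP => [-> /[1!inE] /eqP -> //|/eqP n0].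
case: ifP => odd_n; last rewrite mem_cat => /orP[];
  move=> /mapP[w /IH hw ->]; have /hyperbinaryE[_ _ vw] := hw;
  have := odd_double_half n; rewrite odd_n /= => nE;
  apply/hyperbinary_rcons; split=> //; try by [rewrite vw | lia].
all: by move=> w0; move: vw; rewrite w0 /word_val /=; lia.
Qed.

Lemma expansions_fuel_complete k n x :
  n < k -> hyperbinary n x -> x \in expansions_fuel k n.
Proof.
elim: k n x => [//|k IH] n x ltnk hx /=.
case: eqP => [n0|/eqP n0]; first by move: hx; rewrite n0 => /hyperbinary0 ->; rewrite inE.
case/lastP: x hx => [/hyperbinaryE[_ _ /esym/eqP]|w d /hyperbinary_rcons[d3 hw nE _]].
  by rewrite (negbTE n0).
have mem_w m : m = word_val w -> w \in expansions_fuel k m.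
  by move=> ->; apply: IH => //; lia.
have odd_n : odd n = odd d by rewrite nE oddD odd_double.
have [d0|[d1|d2]] : d = 0 \/ d = 1 \/ d = 2 by lia.
all: rewrite odd_n; subst d => /=.
- by rewrite mem_cat (mem_map (@rcons_injl _ 0)) mem_w //; lia.
- by rewrite (mem_map (@rcons_injl _ 1)) mem_w //; lia.
- by rewrite mem_cat (mem_map (@rcons_injl _ 2)) mem_w ?orbT //; lia.
Qed.

Lemma mem_expansions n x : x \in expansions n <-> hyperbinary n x.
Proof. by split; [exact: expansions_fuel_sound | exact: expansions_fuel_complete]. Qed.

Lemma expansions_uniq n : uniq (expansions n).
Proof.
rewrite /expansions; move: n.+1 => k; elim: k n => [//|k IH] n /=.
case: eqP => // _; case: ifP => _; first by rewrite map_inj_uniq //; exact: rcons_injl.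
rewrite cat_uniq !map_inj_uniq ?IH ?andbT //=; try exact: rcons_injl.
by apply/hasPn=> _ /mapP[w _ ->]; apply/mapP=> -[w' _ /rcons_inj[]].
Qed.

Lemma ones_rcons w d : ones (rcons w d) = ones w + (d == 1).
Proof. by rewrite /ones -cats1 count_cat /= addn0 eq_sym. Qed.

Lemma sum_expansions_fuel k n :
  n < k -> \sum_(x <- expansions_fuel k n) 2 ^ ones x = n.+1.
Proof.
elim: k n => [//|k IH] n ltnk /=.
case: eqP => [->|/eqP n0]; first by rewrite big_seq1.
have sum_rcons d m : m < k ->
    \sum_(x <- [seq rcons w d | w <- expansions_fuel k m]) 2 ^ ones x = 2 ^ (d == 1) * m.+1.
  move=> ltmk; rewrite big_map -(IH m ltmk) big_distrr /=.
  by apply: eq_bigr => w _; rewrite ones_rcons expnD mulnC.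
have := odd_double_half n.
by case: ifP => odd_n; rewrite ?big_cat !sum_rcons /=; lia.
Qed.

Lemma sum_expansions n : \sum_(x <- expansions n) 2 ^ ones x = n.+1.
Proof. exact: sum_expansions_fuel. Qed.

Lemma arc_ones {m l x y} : A_arc m l x y ->
  if l is Single then ones y = (ones x).+1 else ones x = (ones y).+1.
Proof.
case=> _ [_]; case: l => [[[u [v [-> ->]]] | [v [-> ->]]] | [u [v [-> ->]]]];
  rewrite /ones ?count_cat /=; lia.
Qed.

Lemma hyperbinary_swap m u v a b a' b' :
  hyperbinary m (u ++ [:: a; b] ++ v) -> a' < 3 -> b' < 3 -> a.*2 + b = a'.*2 + b' ->
  (u = [::] -> a' != 0) -> hyperbinary m (u ++ [:: a'; b'] ++ v).
Proof.
move=> /hyperbinaryE[digits lead <-] a'3 b'3 ab u_a'; apply/hyperbinaryE; split.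
- by move: digits; rewrite !all_cat /= a'3 b'3 => /and3P[-> _ ->].
- by case: u u_a' lead {digits} => [/(_ erefl)|].
- by rewrite !word_val_cat !size_cat !word_val_cons /=; lia.
Qed.

Lemma arc_descent {m x} : hyperbinary m x -> 2 \in x ->
  exists l y, A_arc m l x y /\ sumn y < sumn x.
Proof.
move=> + x2; case/splitPr: x2 => u v; elim/last_ind: u v => [|u c IH] v hx.
  exists Single, [:: 1, 0 & v]; split; last by rewrite /=; lia.
  (* both [word_val (2 :: v)] and [word_val [:: 1, 0 & v]] reduce to [foldl _ 2 v] *)
  by do 2!split=> //; right; exists v.
rewrite -cats1 -catA /= in hx *.
have [c0|[c1|c2]] : c = 0 \/ c = 1 \/ c = 2.
  by move: hx => /hyperbinaryE[]; rewrite all_cat /= => /andP[_ /andP[]]; lia.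
- subst c; exists Single, (u ++ [:: 1; 0] ++ v); split; last by rewrite !sumn_cat /=; lia.
  do 2!split=> //; last by left; exists u, v.
  exact: hyperbinary_swap hx _ _ _ _.
- subst c; exists Double, (u ++ [:: 2; 0] ++ v); split; last by rewrite !sumn_cat /=; lia.
  do 2!split=> //; last by exists u, v.
  exact: hyperbinary_swap hx _ _ _ _.
- by subst c; exact: IH (2 :: v) hx.
Qed.

Lemma arc_ind m (P : seq nat -> Prop) :
  (forall x, hyperbinary m x -> 2 \notin x -> P x) ->
  (forall l x y, A_arc m l x y -> P y -> P x) ->
  forall x, hyperbinary m x -> P x.
Proof.
move=> Pbinary Parc x; elim: (sumn x).+1 {-2}x (ltnSn (sumn x)) => [//|k IH] {}x ltxk hx.
have [x2|/(Pbinary x hx)//] := boolP (2 \in x).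
have [l [y [xy lt_yx]]] := arc_descent hx x2.
have [_ [hy _]] := xy.
by apply: Parc xy (IH _ _ hy); lia.
Qed.

Lemma binary_expansion_uniq {m x z} : hyperbinary m x -> hyperbinary m z ->
  2 \notin x -> 2 \notin z -> x = z.
Proof.
elim/last_ind: x m z => [|w d IH] m z hx hz.
  by move: hz; have /hyperbinaryE[_ _ <-] := hx => /hyperbinary0 ->.
case/lastP: z hz => [|w' d'] hz.
  by move: hx; have /hyperbinaryE[_ _ <-] := hz => /hyperbinary0 /(congr1 size); rewrite size_rcons.
move: hx hz => /hyperbinary_rcons[d3 hw mE _] /hyperbinary_rcons[d'3 hw' mE' _].
rewrite !mem_rcons !inE !negb_or => /andP[d2 w2] /andP[d'2 w'2].
have dd' : d = d' by lia.
have ww' : word_val w = word_val w' by lia.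
by rewrite dd' (IH _ w' hw) // ww'.
Qed.

Lemma even_expansion_without_ones k : exists w, hyperbinary k.*2 w /\ ones w = 0.
Proof.
elim/ltn_ind: k => k IH.
have [->|k_gt0] := posnP k; first by exists [::].
have [w [hw w1]] := IH k./2 ltac:(lia).
exists (rcons w (odd k).*2); split; last by rewrite ones_rcons w1; case: (odd k).
have /hyperbinaryE[_ _ vw] := hw.
apply/hyperbinary_rcons; split; first by case: (odd k).
- by rewrite vw.
- by rewrite vw; have := odd_double_half k; lia.
- move=> w0; move: vw; rewrite w0 /word_val /=; have := odd_double_half k.
  by case: (odd k) => /=; lia.
Qed.

Section ArcMorphism.

Context {m n : nat} {phi : seq nat -> seq nat}.
Hypothesis phi_arc : forall l x y, A_arc m l x y -> A_arc n l (phi x) (phi y).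

Lemma arc_morph_ones {l x y} : A_arc m l x y ->
  ones (phi x) + ones y = ones x + ones (phi y).
Proof.
move=> xy; have := arc_ones xy; have := arc_ones (phi_arc _ _ _ xy).
by case: l {xy}; lia.
Qed.

Lemma ones_morph_shift {x x'} : hyperbinary m x -> hyperbinary m x' ->
  ones (phi x) + ones x' = ones x + ones (phi x').
Proof.
move: x; apply: arc_ind => [x hx x2 | l x y xy IH hx']; last first.
  by have := IH hx'; have := arc_morph_ones xy; lia.
move: x'; apply: arc_ind => [x' hx' x'2 | l x' y' /arc_morph_ones]; last by lia.
by rewrite (binary_expansion_uniq hx hx' x2 x'2) addnC.
Qed.

Lemma ones_le_morph {x} : ~~ odd m -> hyperbinary m x -> ones x <= ones (phi x).
Proof.
move=> even_m hx; have [w [hw w1]] := even_expansion_without_ones m./2.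
rewrite (even_halfK even_m) in hw.
by have := ones_morph_shift hx hw; lia.
Qed.

End ArcMorphism.

Section Isomorphism.

Context {m n : nat} {phi psi : seq nat -> seq nat}.
Hypotheses (phi_H : forall x, hyperbinary m x -> hyperbinary n (phi x))
           (psi_H : forall y, hyperbinary n y -> hyperbinary m (psi y))
           (phiK : forall x, hyperbinary m x -> psi (phi x) = x)
           (psiK : forall y, hyperbinary n y -> phi (psi y) = y)
           (phi_arcE : forall l x y, hyperbinary m x -> hyperbinary m y ->
              A_arc m l x y <-> A_arc n l (phi x) (phi y)).

Lemma phi_arc l x y : A_arc m l x y -> A_arc n l (phi x) (phi y).
Proof. by move=> xy; have [hx [hy _]] := xy; apply/phi_arcE. Qed.

Lemma psi_arc l x y : A_arc n l x y -> A_arc m l (psi x) (psi y).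
Proof.
move=> xy; have [hx [hy _]] := xy.
by apply/phi_arcE; rewrite ?psiK //; apply: psi_H.
Qed.

Lemma ones_iso x : ~~ odd m -> ~~ odd n -> hyperbinary m x -> ones (phi x) = ones x.
Proof.
move=> even_m even_n hx; apply/eqP; rewrite eqn_leq (ones_le_morph phi_arc) //.
by rewrite -{2}(phiK _ hx) (ones_le_morph psi_arc) //; apply: phi_H.
Qed.

Lemma perm_map_expansions : perm_eq (map phi (expansions m)) (expansions n).
Proof.
apply: uniq_perm; [|exact: expansions_uniq|move=> y].
  rewrite map_inj_in_uniq ?expansions_uniq // => x x' /mem_expansions hx /mem_expansions hx' e.
  by rewrite -(phiK _ hx) e phiK.
apply/mapP/idP => [[x /mem_expansions hx ->] | /mem_expansions hy].
  exact/mem_expansions/phi_H.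
by exists (psi y); [apply/mem_expansions/psi_H | rewrite psiK].
Qed.

Lemma iso_even_eq : ~~ odd m -> ~~ odd n -> m = n.
Proof.
move=> even_m even_n; apply: succn_inj.
rewrite -(sum_expansions m) -(sum_expansions n) -(perm_big _ perm_map_expansions) big_map.
by apply: eq_big_seq => x /mem_expansions hx; rewrite ones_iso.
Qed.

End Isomorphism.

Theorem mainTheorem10 (m n : nat) :
  ~~ odd m -> ~~ odd n -> A_isomorphic m n -> m = n.
Proof.
move=> even_m even_n [phi [psi [phi_H [psi_H [phiK [psiK arcE]]]]]].
exact: iso_even_eq phi_H psi_H phiK psiK arcE even_m even_n.
Qed.
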